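(* Let $s,r\ge 0$ be real numbers, not both zero, and put $\gamma_1(s)=(0,2s,0)$, $\gamma_2(r)=(2r,0,0)\in\mathbb{R}^3$ and $D=\sqrt{r^2+s^2}$. Let $x=(x_1,x_2,x_3)$ and $y=(y_1,y_2,y_3)$ be points of $\mathbb{R}^3$ satisfying \[ \sqrt{(x_1-2r)^2+x_2^2+x_3^2}+\sqrt{x_1^2+(x_2-2s)^2+x_3^2}=\sqrt{(y_1-2r)^2+y_2^2+y_3^2}+\sqrt{y_1^2+(y_2-2s)^2+y_3^2}, \] \[ \frac{x_1-2r}{\sqrt{(x_1-2r)^2+x_2^2+x_3^2}}=\frac{y_1-2r}{\sqrt{(y_1-2r)^2+y_2^2+y_3^2}},\qquad \frac{x_2-2s}{\sqrt{x_1^2+(x_2-2s)^2+x_3^2}}=\frac{y_2-2s}{\sqrt{y_1^2+(y_2-2s)^2+y_3^2}}. \] Define $\rho\ge 0$ by $\cosh\rho=\dfrac{|x-\gamma_1(s)|+|x-\gamma_2(r)|}{2D}$ (the prolate spheroidal ''radial'' coordinate of $x$ with respect to the foci $\gamma_1(s),\gamma_2(r)$; by the first equation it is the same for $y$). If $\rho>\ln 6$, then either $x=y$ or $x=(y_1,y_2,-y_3)$.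
   Context: This is the setting of multistatic SAR with transmitters on the line $\gamma_1$ and receivers on the perpendicular line $\gamma_2$ in the plane $x_3=0$. The three equations express that the scene points $x$ and $y$ give the same travel time $|\gamma_1(s)-\cdot|+|\cdot-\gamma_2(r)|$ and the same derivatives of this travel time with respect to $s$ and $r$, i.e. they are the conditions for two points of the canonical relation of the forward scattering operator (phase $\omega(t-(|\gamma_1(s)-x|+|x-\gamma_2(r)|)/c_0)$) to project to the same point of the data cotangent space. The conclusion says the only possible artefact is the mirror image across the plane $x_3=0$. *)

From Stdlib Require Export Reals.
Open Scope R_scope.

Definition dist3 (a1 a2 a3 b1 b2 b3 : R) : R :=
  sqrt ((a1 - b1)^2 + (a2 - b2)^2 + (a3 - b3)^2).

From Stdlib Require Import Reals Lra Psatz.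
Open Scope R_scope.

(* Let a and b be the distances from x to gamma2(r) and gamma1(s), S = a + b,
   and c, d the direction cosines (x1 - 2r)/a and (x2 - 2s)/b.  Substituting
   x1 = 2r + c a and x2 = 2s + d b makes a^2 - b^2 linear in a and b; with
   b = S - a it becomes a linear equation for a whose coefficient
   2S + 4rc + 4sd is positive as soon as S > 2(r + s), because c, d >= -1.
   The hypothesis rho > ln 6 gives S = 2 D cosh rho > 6D >= 2(r + s).  Hence the
   data (S, c, d), shared by x and y, determine a and b, then x1 and x2, and
   x3 up to sign. *)

Lemma cosh_gt_3 (rho : R) : ln 6 < rho -> 3 < cosh rho.
Proof.
  intros Hrho. unfold cosh.
  assert (H6 : 6 < exp rho).
  { rewrite <- (exp_ln 6) by lra. apply exp_increasing. exact Hrho. }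
  pose proof (exp_pos (- rho)). lra.
Qed.

Lemma dist3_ge0 (a1 a2 a3 b1 b2 b3 : R) : 0 <= dist3 a1 a2 a3 b1 b2 b3.
Proof. apply sqrt_pos. Qed.

Lemma dist3_sqr (a1 a2 a3 b1 b2 b3 : R) :
  dist3 a1 a2 a3 b1 b2 b3 ^ 2 = (a1 - b1)^2 + (a2 - b2)^2 + (a3 - b3)^2.
Proof.
  unfold dist3. rewrite pow2_sqrt; [reflexivity |].
  pose proof (pow2_ge_0 (a1 - b1)). pose proof (pow2_ge_0 (a2 - b2)).
  pose proof (pow2_ge_0 (a3 - b3)). lra.
Qed.

Lemma dist3_eq0 (a1 a2 a3 b1 b2 b3 : R) :
  dist3 a1 a2 a3 b1 b2 b3 = 0 -> a1 = b1 /\ a2 = b2 /\ a3 = b3.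
Proof.
  intros H0. pose proof (dist3_sqr a1 a2 a3 b1 b2 b3) as Hsq.
  rewrite H0 in Hsq.
  pose proof (pow2_ge_0 (a1 - b1)). pose proof (pow2_ge_0 (a2 - b2)).
  pose proof (pow2_ge_0 (a3 - b3)).
  repeat split; nra.
Qed.

Lemma dist3_ge_opp_sub1 (a1 a2 a3 b1 b2 b3 : R) :
  - dist3 a1 a2 a3 b1 b2 b3 <= a1 - b1.
Proof.
  pose proof (dist3_sqr a1 a2 a3 b1 b2 b3). pose proof (dist3_ge0 a1 a2 a3 b1 b2 b3).
  pose proof (pow2_ge_0 (a1 - b1)). pose proof (pow2_ge_0 (a2 - b2)).
  pose proof (pow2_ge_0 (a3 - b3)). nra.
Qed.

Lemma dist3_ge_opp_sub2 (a1 a2 a3 b1 b2 b3 : R) :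
  - dist3 a1 a2 a3 b1 b2 b3 <= a2 - b2.
Proof.
  pose proof (dist3_sqr a1 a2 a3 b1 b2 b3). pose proof (dist3_ge0 a1 a2 a3 b1 b2 b3).
  pose proof (pow2_ge_0 (a1 - b1)). pose proof (pow2_ge_0 (a2 - b2)).
  pose proof (pow2_ge_0 (a3 - b3)). nra.
Qed.

Lemma add_le_2_sqrt_add_sqr (r s : R) :
  0 <= r -> 0 <= s -> r + s <= 2 * sqrt (r^2 + s^2).
Proof.
  intros hr hs.
  pose proof (pow2_sqrt (r^2 + s^2) ltac:(nra)). pose proof (sqrt_pos (r^2 + s^2)).
  assert (r <= sqrt (r^2 + s^2)) by nra. assert (s <= sqrt (r^2 + s^2)) by nra.
  lra.
Qed.

Lemma focal_sum_gt_of_cosh (r s S rho : R) :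
  0 <= r -> 0 <= s -> ~ (s = 0 /\ r = 0) -> ln 6 < rho ->
  cosh rho = S / (2 * sqrt (r^2 + s^2)) -> 2 * (r + s) < S.
Proof.
  intros hr hs hrs Hrho Hcosh.
  assert (HD : 0 < sqrt (r^2 + s^2)).
  { apply sqrt_lt_R0.
    destruct (Req_dec r 0) as [Hr0 | Hr0].
    - assert (0 < s) by (destruct (Req_dec s 0); [tauto | lra]). nra.
    - assert (0 < r) by lra. nra. }
  pose proof (add_le_2_sqrt_add_sqr r s hr hs).
  pose proof (cosh_gt_3 rho Hrho) as Hcosh3.
  rewrite Hcosh in Hcosh3.
  apply (Rmult_lt_compat_r (2 * sqrt (r^2 + s^2))) in Hcosh3; [|lra].
  field_simplify in Hcosh3; lra.
Qed.

(* The distance a to gamma2(r) = (2r,0,0) of a point with focal sum S and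
   direction cosines c, d, obtained by solving a^2 - b^2 = 4s^2 - 4r^2
   + 4sdb - 4rca for a with b = S - a. *)
Definition focal_radius (r s S c d : R) : R :=
  (S^2 - 4*r^2 + 4*s^2 + 4*s*d*S) / (2*S + 4*r*c + 4*s*d).

Section FocalPoint.

Variables r s x1 x2 x3 : R.
Hypotheses (hr : 0 <= r) (hs : 0 <= s).

Let a := dist3 x1 x2 x3 (2*r) 0 0.
Let b := dist3 x1 x2 x3 0 (2*s) 0.

Hypothesis focal_sum_gt : 2 * (r + s) < a + b.

Lemma focal_dists_gt0 : 0 < a /\ 0 < b.
Proof.
  pose proof (dist3_ge0 x1 x2 x3 (2*r) 0 0) as Ha0; fold a in Ha0.
  pose proof (dist3_ge0 x1 x2 x3 0 (2*s) 0) as Hb0; fold b in Hb0.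
  pose proof (dist3_sqr x1 x2 x3 (2*r) 0 0) as Ha2; fold a in Ha2.
  pose proof (dist3_sqr x1 x2 x3 0 (2*s) 0) as Hb2; fold b in Hb2.
  split; apply Rnot_le_lt; intros Hle.
  - destruct (dist3_eq0 x1 x2 x3 (2*r) 0 0 ltac:(fold a; lra)) as (E1 & E2 & E3).
    assert (Hb : b^2 = 4*r^2 + 4*s^2) by (rewrite Hb2, E1, E2, E3; ring).
    nra.
  - destruct (dist3_eq0 x1 x2 x3 0 (2*s) 0 ltac:(fold b; lra)) as (E1 & E2 & E3).
    assert (Ha : a^2 = 4*r^2 + 4*s^2) by (rewrite Ha2, E1, E2, E3; ring).
    nra.
Qed.

Lemma dist_gamma2_eq_focal_radius :
  a = focal_radius r s (a + b) ((x1 - 2*r) / a) ((x2 - 2*s) / b).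
Proof.
  destruct focal_dists_gt0 as [Ha Hb].
  set (c := (x1 - 2*r) / a). set (d := (x2 - 2*s) / b).
  assert (Ec : x1 - 2*r = c * a) by (unfold c; field; lra).
  assert (Ed : x2 - 2*s = d * b) by (unfold d; field; lra).
  assert (Hc : -1 <= c).
  { pose proof (dist3_ge_opp_sub1 x1 x2 x3 (2*r) 0 0) as H; fold a in H. nra. }
  assert (Hd : -1 <= d).
  { pose proof (dist3_ge_opp_sub2 x1 x2 x3 0 (2*s) 0) as H; fold b in H. nra. }
  assert (Hcoef : 0 < 2*(a + b) + 4*r*c + 4*s*d).
  { assert (0 <= r * (c + 1)) by (apply Rmult_le_pos; lra).
    assert (0 <= s * (d + 1)) by (apply Rmult_le_pos; lra).
    lra. }
  assert (Hdiff : a^2 - b^2 = 4*s^2 - 4*r^2 + 4*s*d*b - 4*r*c*a).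
  { pose proof (dist3_sqr x1 x2 x3 (2*r) 0 0) as Ha2; fold a in Ha2.
    pose proof (dist3_sqr x1 x2 x3 0 (2*s) 0) as Hb2; fold b in Hb2.
    rewrite Ha2, Hb2.
    replace x1 with (2*r + c*a) by lra. replace x2 with (2*s + d*b) by lra.
    ring. }
  unfold focal_radius. field_simplify_eq; [nra | lra].
Qed.

End FocalPoint.

Theorem mainTheorem1 (s r : R) (x1 x2 x3 y1 y2 y3 : R) (rho : R) :
  0 <= s -> 0 <= r -> ~ (s = 0 /\ r = 0) ->
  dist3 x1 x2 x3 (2*r) 0 0 + dist3 x1 x2 x3 0 (2*s) 0 =
    dist3 y1 y2 y3 (2*r) 0 0 + dist3 y1 y2 y3 0 (2*s) 0 ->
  (x1 - 2*r) / dist3 x1 x2 x3 (2*r) 0 0 = (y1 - 2*r) / dist3 y1 y2 y3 (2*r) 0 0 ->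
  (x2 - 2*s) / dist3 x1 x2 x3 0 (2*s) 0 = (y2 - 2*s) / dist3 y1 y2 y3 0 (2*s) 0 ->
  0 <= rho ->
  cosh rho = (dist3 x1 x2 x3 0 (2*s) 0 + dist3 x1 x2 x3 (2*r) 0 0)
               / (2 * sqrt (r^2 + s^2)) ->
  ln 6 < rho ->
  (x1 = y1 /\ x2 = y2 /\ x3 = y3) \/ (x1 = y1 /\ x2 = y2 /\ x3 = - y3).
Proof.
  intros hs hr hrs Hsum Hc Hd _ Hcosh Hrho.
  assert (Hfar_x := focal_sum_gt_of_cosh r s _ rho hr hs hrs Hrho Hcosh).
  rewrite (Rplus_comm (dist3 x1 x2 x3 0 (2*s) 0)) in Hfar_x.
  assert (Hfar_y := Hfar_x). rewrite Hsum in Hfar_y.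
  destruct (focal_dists_gt0 r s x1 x2 x3 hr hs Hfar_x) as [Hax Hbx].
  assert (Ha : dist3 x1 x2 x3 (2*r) 0 0 = dist3 y1 y2 y3 (2*r) 0 0).
  { rewrite (dist_gamma2_eq_focal_radius r s x1 x2 x3 hr hs Hfar_x),
      (dist_gamma2_eq_focal_radius r s y1 y2 y3 hr hs Hfar_y), Hsum, Hc, Hd.
    reflexivity. }
  assert (Hb : dist3 x1 x2 x3 0 (2*s) 0 = dist3 y1 y2 y3 0 (2*s) 0) by lra.
  rewrite <- Ha in Hc. rewrite <- Hb in Hd.
  apply Rdiv_eq_reg_r in Hc; [|lra]. apply Rdiv_eq_reg_r in Hd; [|lra].
  assert (H3 : x3² = y3²).
  { pose proof (dist3_sqr x1 x2 x3 (2*r) 0 0). pose proof (dist3_sqr y1 y2 y3 (2*r) 0 0).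
    unfold Rsqr. replace y1 with x1 in * by lra. replace y2 with x2 in * by lra.
    nra. }
  destruct (Rsqr_eq x3 y3 H3); [left | right]; repeat split; lra.
Qed.
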